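(* Fix integers $0\le k\le n$ and on $\mathbb{C}^n=\mathbb{R}^n_x\oplus\sqrt{-1}\mathbb{R}^n_y$ let \[\rho_1(x,y)=\sum_{i=1}^n x_i^2,\qquad \rho_2(x,y)=\sum_{i=1}^k x_i^2+\sum_{i=k+1}^n y_i^2,\] and $L_1=\{\rho_1=0\}=\{x_i=0,\ 1\le i\le n\}$, $L_2=\{\rho_2=0\}=\{x_i=0,\ y_j=0\ |\ 1\le i\le k,\ k+1\le j\le n\}$. Then the functions $\sqrt{\rho_1\rho_2}$ and $\rho_1\rho_2$ are weakly plurisubharmonic (on any open subset of $\mathbb{C}^n$). Furthermore, there is a variety $V\subset\mathbb{C}^n$ with $V\cap(L_1\cup L_2)=L_1\cap L_2$ such that $\rho_1\rho_2$ is strictly plurisubharmonic outside $V$.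
   Context: A function $f$ on an open subset of $\mathbb{C}^n$ is weakly (resp. strictly) plurisubharmonic if its Levi form $dd^cf(\cdot,\sqrt{-1}\cdot)$ is positive semidefinite (resp. positive definite). *)

From HB Require Import structures.
From mathcomp Require Import all_boot all_order all_algebra.
From mathcomp Require Import all_classical all_reals all_analysis.
Set Implicit Arguments. Unset Strict Implicit. Unset Printing Implicit Defensive.
Import Order.TTheory GRing.Theory Num.Theory.
Local Open Scope ring_scope.
Local Open Scope classical_set_scope.

(* points of C^n = R^n_x (+) sqrt(-1) R^n_y *)
Definition Cn (R : realType) (n : nat) : Type := (('I_n -> R) * ('I_n -> R))%type.

Definition cshift (R : realType) (n : nat) (p : Cn R n) (t : R) (w : Cn R n) : Cn R n :=
  (fun i => p.1 i + t * w.1 i, fun i => p.2 i + t * w.2 i).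

(* multiplication by sqrt(-1): (a + i b) |-> (-b + i a) *)
Definition Jc (R : realType) (n : nat) (w : Cn R n) : Cn R n :=
  (fun i => - w.2 i, fun i => w.1 i).

Definition hess2 (R : realType) (n : nat) (f : Cn R n -> R) (p w : Cn R n) : R :=
  derive1n 2 (fun t : R => f (cshift p t w)) 0.

(* Levi form  dd^c f (w, sqrt(-1) w), normalised as
   sum_{j,k} f_{z_j zbar_k} w_j conj(w_k) = (Hess f (w,w) + Hess f (Jw,Jw)) / 4 *)
Definition levi (R : realType) (n : nat) (f : Cn R n -> R) (p w : Cn R n) : R :=
  (hess2 f p w + hess2 f p (Jc w)) / 4%:R.

Definition cn_nonzero (R : realType) (n : nat) (w : Cn R n) : Prop :=
  exists i, w.1 i != 0 \/ w.2 i != 0.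

Definition weakly_psh_at (R : realType) (n : nat) (f : Cn R n -> R) (p : Cn R n) : Prop :=
  forall w : Cn R n, 0 <= levi f p w.
Definition strictly_psh_at (R : realType) (n : nat) (f : Cn R n -> R) (p : Cn R n) : Prop :=
  forall w : Cn R n, cn_nonzero w -> 0 < levi f p w.

Inductive polyfun (R : realType) (n : nat) : (Cn R n -> R) -> Prop :=
| polyfun_cst (c : R) : polyfun (fun _ => c)
| polyfun_x (i : 'I_n) : polyfun (fun p => p.1 i)
| polyfun_y (i : 'I_n) : polyfun (fun p => p.2 i)
| polyfun_add f g : polyfun f -> polyfun g -> polyfun (fun p => f p + g p)
| polyfun_mul f g : polyfun f -> polyfun g -> polyfun (fun p => f p * g p).

Definition is_variety (R : realType) (n : nat) (V : set (Cn R n)) : Prop :=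
  exists P : Cn R n -> R, polyfun P /\ V = [set p : Cn R n | P p = 0].

Definition rho1 (R : realType) (n : nat) (p : Cn R n) : R :=
  \sum_(i < n) p.1 i ^+ 2.
Definition rho2 (R : realType) (n k : nat) (p : Cn R n) : R :=
  \sum_(i < n | (i < k)%N) p.1 i ^+ 2 + \sum_(i < n | (k <= i)%N) p.2 i ^+ 2.

Definition L1 (R : realType) (n : nat) : set (Cn R n) := [set p : Cn R n | rho1 p = 0].
Definition L2 (R : realType) (n k : nat) : set (Cn R n) := [set p : Cn R n | rho2 k p = 0].

(* Along a complex line, rho1 and rho2 are real quadratics whose Levi forms are
   both |w|^2/2, and their (0,1)-gradients g = dbar rho1, h = dbar rho2 satisfy
   |g|^2 = rho1 =: a, |h|^2 = rho2 =: d and Re<g,h> = sum_(i<k) x_i^2 >= 0.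
   Twice the Levi form of rho1 rho2 is then (a + d)|w|^2 + 4 Re(<w,g> conj <w,h>),
   and that of sqrt(rho1 rho2) is a positive multiple of
   a d (a + d)|w|^2 - |d<w,g> - a<w,h>|^2.
   Cauchy-Schwarz for the vector d g - a h, whose squared norm is
   a d (a + d) - 2 a d Re<g,h>, makes the latter nonnegative, and a d times the
   former is |d<w,g> + a<w,h>|^2 plus the latter.  If the former vanishes for some
   w != 0, then Re<g,h> = 0 and w is parallel to d g - a h and orthogonal to
   d g + a h, so <d g - a h, d g + a h> = a d (d - a) + 2 sqrt(-1) a d Im<g,h>
   vanishes: p lies on the variety {<g,h> = 0, rho1 = rho2}. *)

From HB Require Import structures.
From mathcomp Require Import all_boot all_order all_algebra.
From mathcomp Require Import all_classical all_reals all_analysis.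
From mathcomp Require Import ring lra.
Set Implicit Arguments. Unset Strict Implicit. Unset Printing Implicit Defensive.
Import Order.TTheory GRing.Theory Num.Theory.
Local Open Scope ring_scope.
Local Open Scope classical_set_scope.

Section HermitianProduct.
Variables (R : realType) (n : nat).
Implicit Types (u v w : Cn R n) (s t : R).

(* [cdotr u v] and [cdoti u v] are the real and imaginary parts of the
   Hermitian product [\sum_i u_i * conj v_i], where [u_i = u.1 i + sqrt(-1) u.2 i]. *)
Definition cdotr u v : R := \sum_(i < n) (u.1 i * v.1 i + u.2 i * v.2 i).
Definition cdoti u v : R := \sum_(i < n) (u.2 i * v.1 i - u.1 i * v.2 i).
Definition cnorm2 v : R := \sum_(i < n) (v.1 i ^+ 2 + v.2 i ^+ 2).
Definition ccomb s t u v : Cn R n :=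
  (fun i => s * u.1 i + t * v.1 i, fun i => s * u.2 i + t * v.2 i).

Lemma cnorm2_ge0 v : 0 <= cnorm2 v.
Proof. by apply: sumr_ge0 => i _; rewrite addr_ge0 ?sqr_ge0. Qed.

Lemma cnorm2_eq0P v : cnorm2 v = 0 -> forall i, v.1 i = 0 /\ v.2 i = 0.
Proof.
move=> /eqP; rewrite psumr_eq0 => [/allP v0 i|i _]; last by rewrite addr_ge0 ?sqr_ge0.
have /v0 /= : i \in index_enum 'I_n by rewrite mem_index_enum.
by rewrite paddr_eq0 ?sqr_ge0 // !sqrf_eq0 => /andP[/eqP -> /eqP ->].
Qed.

Lemma cnorm2_gt0 v : cn_nonzero v -> 0 < cnorm2 v.
Proof.
case=> i vi; rewrite lt_def cnorm2_ge0 andbT; apply/eqP => /cnorm2_eq0P /(_ i)[v1 v2].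
by move: vi; rewrite v1 v2 eqxx; case.
Qed.

Lemma cdotrr v : cdotr v v = cnorm2 v.
Proof. by apply: eq_bigr => i _; rewrite !expr2. Qed.

Lemma cdotii v : cdoti v v = 0.
Proof. by rewrite /cdoti big1 // => i _; rewrite mulrC subrr. Qed.

Lemma cdotrC u v : cdotr u v = cdotr v u.
Proof. by apply: eq_bigr => i _; rewrite mulrC [u.2 i * _]mulrC. Qed.

Lemma cdotiC u v : cdoti u v = - cdoti v u.
Proof. by rewrite -sumrN; apply: eq_bigr => i _; ring. Qed.

Lemma cdotr_combl s t u v w : cdotr (ccomb s t u v) w = s * cdotr u w + t * cdotr v w.
Proof. by rewrite !mulr_sumr -big_split; apply: eq_bigr => i _ /=; ring. Qed.

Lemma cdoti_combl s t u v w : cdoti (ccomb s t u v) w = s * cdoti u w + t * cdoti v w.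
Proof. by rewrite !mulr_sumr -big_split; apply: eq_bigr => i _ /=; ring. Qed.

Lemma cdotr_combr s t u v w : cdotr w (ccomb s t u v) = s * cdotr w u + t * cdotr w v.
Proof. by rewrite cdotrC cdotr_combl ![cdotr _ w]cdotrC. Qed.

Lemma cdoti_combr s t u v w : cdoti w (ccomb s t u v) = s * cdoti w u + t * cdoti w v.
Proof. by rewrite cdotiC cdoti_combl ![cdoti _ w]cdotiC; ring. Qed.

Lemma cdotr_norm0 u v : cnorm2 u = 0 -> cdotr u v = 0.
Proof. by move=> /cnorm2_eq0P u0; rewrite [LHS]big1 // => i _; have [-> ->] := u0 i; ring. Qed.

Lemma cdoti_norm0 u v : cnorm2 u = 0 -> cdoti u v = 0.
Proof. by move=> /cnorm2_eq0P u0; rewrite [LHS]big1 // => i _; have [-> ->] := u0 i; ring. Qed.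

Lemma cdotr_Jc w v : cdotr (Jc w) v = - cdoti w v.
Proof. by rewrite -sumrN; apply: eq_bigr => i _ /=; ring. Qed.

(* The right-hand side is the squared norm of [cnorm2 w * u - <u, w> * w]. *)
Lemma cauchy_schwarz_defect u w :
  cnorm2 w * (cnorm2 u * cnorm2 w - (cdotr u w ^+ 2 + cdoti u w ^+ 2)) =
  \sum_(i < n) ((cnorm2 w * u.1 i - (cdotr u w * w.1 i - cdoti u w * w.2 i)) ^+ 2
              + (cnorm2 w * u.2 i - (cdotr u w * w.2 i + cdoti u w * w.1 i)) ^+ 2).
Proof.
set W := cnorm2 w; set A := cdotr u w; set B := cdoti u w.
rewrite (eq_bigr (fun i => W ^+ 2 * (u.1 i ^+ 2 + u.2 i ^+ 2)
    + (A ^+ 2 + B ^+ 2) * (w.1 i ^+ 2 + w.2 i ^+ 2)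
    - 2 * W * A * (u.1 i * w.1 i + u.2 i * w.2 i)
    - 2 * W * B * (u.2 i * w.1 i - u.1 i * w.2 i))); last by move=> i _; ring.
by rewrite !big_split /= !sumrN -!mulr_sumr /W /A /B /cnorm2 /cdotr /cdoti; ring.
Qed.

Lemma cauchy_schwarz u w : cdotr u w ^+ 2 + cdoti u w ^+ 2 <= cnorm2 u * cnorm2 w.
Proof.
have := cnorm2_ge0 w; rewrite le_eqVlt eq_sym => /predU1P[w0|w_gt0].
  by rewrite cdotrC cdotiC !(cdotr_norm0, cdoti_norm0) // oppr0 w0; lra.
rewrite -subr_ge0 -(pmulr_rge0 _ w_gt0) cauchy_schwarz_defect.
by apply: sumr_ge0 => i _; rewrite addr_ge0 ?sqr_ge0.
Qed.

Lemma cauchy_schwarz_eq u w v : 0 < cnorm2 w ->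
  cdotr u w ^+ 2 + cdoti u w ^+ 2 = cnorm2 u * cnorm2 w ->
  cnorm2 w * cdotr u v = cdotr u w * cdotr w v - cdoti u w * cdoti w v /\
  cnorm2 w * cdoti u v = cdotr u w * cdoti w v + cdoti u w * cdotr w v.
Proof.
set W := cnorm2 w; set A := cdotr u w; set B := cdoti u w => _ CS_eq.
have /esym := cauchy_schwarz_defect u w; rewrite -/W -/A -/B CS_eq subrr mulr0.
move=> /(@cnorm2_eq0P (fun i => W * u.1 i - (A * w.1 i - B * w.2 i),
                     fun i => W * u.2 i - (A * w.2 i + B * w.1 i))) /= u_eq.
have u1E i : W * u.1 i = A * w.1 i - B * w.2 i by apply/subr0_eq; case: (u_eq i).
have u2E i : W * u.2 i = A * w.2 i + B * w.1 i by apply/subr0_eq; case: (u_eq i).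
split; rewrite mulr_sumr !mulr_sumr -?sumrB -?big_split; apply: eq_bigr => i _ /=.
  by rewrite mulrDr !mulrA u1E u2E; ring.
by rewrite mulrBr !mulrA u1E u2E; ring.
Qed.

End HermitianProduct.

Section ProductLevi.
Variables (R : realType) (n : nat).
Implicit Types (g h u w : Cn R n) (s t : R).

Lemma cdotr_comb_pm s t g h :
  cdotr (ccomb s (- t) g h) (ccomb s t g h) = s ^+ 2 * cnorm2 g - t ^+ 2 * cnorm2 h.
Proof. by rewrite cdotr_combl !cdotr_combr !cdotrr [cdotr h g]cdotrC; ring. Qed.

Lemma cdoti_comb_pm s t g h :
  cdoti (ccomb s (- t) g h) (ccomb s t g h) = 2 * s * t * cdoti g h.
Proof. by rewrite cdoti_combl !cdoti_combr !cdotii [cdoti h g]cdotiC; ring. Qed.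

Definition prod_levi g h w : R := (cnorm2 g + cnorm2 h) * cnorm2 w
  + 4 * (cdotr w g * cdotr w h + cdoti w g * cdoti w h).

Definition comb_gap g h w : R := cnorm2 g * cnorm2 h * (cnorm2 g + cnorm2 h) * cnorm2 w
  - ((cnorm2 h * cdotr w g - cnorm2 g * cdotr w h) ^+ 2
     + (cnorm2 h * cdoti w g - cnorm2 g * cdoti w h) ^+ 2).

Lemma prod_leviC g h w : prod_levi g h w = prod_levi h g w.
Proof. by rewrite /prod_levi; ring. Qed.

Lemma prod_levi_norm0 g h w : cnorm2 g = 0 -> prod_levi g h w = cnorm2 h * cnorm2 w.
Proof.
move=> g0; rewrite /prod_levi [cdotr w g]cdotrC [cdoti w g]cdotiC.
by rewrite (cdotr_norm0 _ g0) (cdoti_norm0 _ g0) g0; ring.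
Qed.

Lemma comb_gapE g h w : let u := ccomb (cnorm2 h) (- cnorm2 g) g h in
  comb_gap g h w = 2 * cnorm2 g * cnorm2 h * cdotr g h * cnorm2 w
    + (cnorm2 u * cnorm2 w - (cdotr u w ^+ 2 + cdoti u w ^+ 2)).
Proof.
move=> u; rewrite /comb_gap -[cnorm2 u]cdotrr /u.
rewrite !(cdotr_combl, cdotr_combr, cdoti_combl) !cdotrr.
rewrite [cdotr h g]cdotrC [cdotr g w]cdotrC [cdotr h w]cdotrC.
by rewrite [cdoti g w]cdotiC [cdoti h w]cdotiC; ring.
Qed.

Lemma comb_gap_ge0 g h w : 0 <= cdotr g h -> 0 <= comb_gap g h w.
Proof.
move=> gh_ge0; rewrite comb_gapE addr_ge0 ?subr_ge0 ?cauchy_schwarz //.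
by rewrite !mulr_ge0 ?cnorm2_ge0.
Qed.

Lemma prod_levi_decomp g h w : cnorm2 g * cnorm2 h * prod_levi g h w =
  (cnorm2 h * cdotr w g + cnorm2 g * cdotr w h) ^+ 2
  + (cnorm2 h * cdoti w g + cnorm2 g * cdoti w h) ^+ 2 + comb_gap g h w.
Proof. by rewrite /prod_levi /comb_gap; ring. Qed.

Lemma prod_levi_ge0 g h w : 0 <= cdotr g h -> 0 <= prod_levi g h w.
Proof.
move=> gh_ge0; have [g0|g_neq0] := eqVneq (cnorm2 g) 0.
  by rewrite prod_levi_norm0 // mulr_ge0 ?cnorm2_ge0.
have [h0|h_neq0] := eqVneq (cnorm2 h) 0.
  by rewrite prod_leviC prod_levi_norm0 // mulr_ge0 ?cnorm2_ge0.
have gh_gt0 : 0 < cnorm2 g * cnorm2 h by rewrite mulr_gt0 // lt_def ?g_neq0 ?h_neq0 cnorm2_ge0.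
rewrite -(pmulr_rge0 _ gh_gt0) prod_levi_decomp.
by rewrite addr_ge0 ?comb_gap_ge0 // addr_ge0 ?sqr_ge0.
Qed.

Lemma prod_levi_eq0_terms g h w :
  0 <= cdotr g h -> 0 < cnorm2 g * cnorm2 h -> 0 < cnorm2 w -> prod_levi g h w = 0 ->
  let u := ccomb (cnorm2 h) (- cnorm2 g) g h in let v := ccomb (cnorm2 h) (cnorm2 g) g h in
  [/\ cdotr g h = 0, cdotr w v = 0, cdoti w v = 0
     & cdotr u w ^+ 2 + cdoti u w ^+ 2 = cnorm2 u * cnorm2 w].
Proof.
move=> gh_ge0 gh_gt0 w_gt0 lev0 u v.
have := prod_levi_decomp g h w; rewrite lev0 mulr0 comb_gapE -/u => /esym decomp0.
have CS_le := cauchy_schwarz u w.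
have c_gt0 : 0 < 2 * (cnorm2 g * cnorm2 h) * cnorm2 w by rewrite mulr_gt0 // mulr_gt0.
have Re_ge0 : 0 <= cdotr g h * (2 * (cnorm2 g * cnorm2 h) * cnorm2 w).
  by rewrite mulr_ge0 // ltW.
have := sqr_ge0 (cnorm2 h * cdotr w g + cnorm2 g * cdotr w h).
have := sqr_ge0 (cnorm2 h * cdoti w g + cnorm2 g * cdoti w h) => sq_i_ge0 sq_r_ge0.
split; last by lra.
- by apply: (mulIf (lt0r_neq0 c_gt0)); rewrite mul0r; lra.
- by rewrite cdotr_combr; apply/eqP; rewrite -sqrf_eq0; apply/eqP; lra.
- by rewrite cdoti_combr; apply/eqP; rewrite -sqrf_eq0; apply/eqP; lra.
Qed.

Lemma prod_levi_eq0 g h w : 0 <= cdotr g h -> 0 < cnorm2 w -> prod_levi g h w = 0 ->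
  [/\ cdotr g h = 0, cdoti g h = 0 & cnorm2 g = cnorm2 h].
Proof.
move=> gh_ge0 w_gt0 lev0; have w_neq0 := gt_eqF w_gt0.
have [g0|g_neq0] := eqVneq (cnorm2 g) 0.
  move/eqP: lev0; rewrite prod_levi_norm0 // mulf_eq0 w_neq0 orbF => /eqP h0.
  by rewrite (cdotr_norm0 _ g0) (cdoti_norm0 _ g0) g0 h0.
have [h0|h_neq0] := eqVneq (cnorm2 h) 0.
  by move/eqP: lev0; rewrite prod_leviC prod_levi_norm0 // mulf_eq0 w_neq0 (negbTE g_neq0).
have gh_gt0 : 0 < cnorm2 g * cnorm2 h by rewrite mulr_gt0 // lt_def ?g_neq0 ?h_neq0 cnorm2_ge0.
have [Re0 wv_r wv_i CS_eq] := prod_levi_eq0_terms gh_ge0 gh_gt0 w_gt0 lev0.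
have [] := cauchy_schwarz_eq (ccomb (cnorm2 h) (cnorm2 g) g h) w_gt0 CS_eq.
rewrite wv_r wv_i !mulr0 subr0 addr0 cdotr_comb_pm cdoti_comb_pm => uv_r uv_i.
have c_neq0 : cnorm2 w * (cnorm2 g * cnorm2 h) != 0 by rewrite mulf_neq0 ?lt0r_neq0.
split => //; first by apply: (mulIf c_neq0); rewrite mul0r; lra.
by apply/eqP; rewrite -subr_eq0; apply/eqP/(mulIf c_neq0); rewrite mul0r; lra.
Qed.

End ProductLevi.

Section SecondDerivatives.
Variable R : realType.
Implicit Types (Q : {poly R}) (a b c d e f t : R).

Lemma derive1n2_horner Q : derive1n 2 (horner Q) 0 = Q^`()^`().[0].
Proof. by rewrite derive1nS derive1n1 -!derivE. Qed.

Lemma is_derive_sqrt_horner Q t : 0 < Q.[t] ->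
  is_derive t 1 (fun s => Num.sqrt Q.[s]) (Q^`().[t] / (2 * Num.sqrt Q.[t])).
Proof.
move=> Qt; rewrite mulrC.
exact: (is_derive1_comp (f := Num.sqrt) (g := horner Q) (is_derive1_sqrt Qt)).
Qed.

Lemma derive1n2_sqrt_horner Q : 0 < Q.[0] ->
  derive1n 2 (fun t => Num.sqrt Q.[t]) 0 =
  Q^`()^`().[0] / (2 * Num.sqrt Q.[0])
  - Q^`().[0] ^+ 2 / (4 * Q.[0] * Num.sqrt Q.[0]).
Proof.
move=> Q0; set s := fun t => Num.sqrt Q.[t].
have s0 : 0 < s 0 by rewrite sqrtr_gt0.
have Q_gt0 : \forall t \near 0, 0 < Q.[t].
  exact: (cvgr_gt _ (@continuous_horner R Q 0) 0 Q0).
have Q'_eq : \forall t \near 0, s^`() t = Q^`().[t] * ((2 : R) *: s t)^-1.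
  near=> t; have Qt : 0 < Q.[t] by near: t.
  by rewrite derive1E; have [_ ->] := is_derive_sqrt_horner Qt.
rewrite derive1nS derive1n1 derive1E (near_eq_derive _ Q'_eq).
have d2s : is_derive (0 : R) 1 ((2 : R) \*: s) ((2 : R) *: (Q^`().[0] / (2 * s 0))).
  exact/is_deriveZ/is_derive_sqrt_horner.
have s2_neq0 : ((2 : R) \*: s) 0 != 0 by rewrite /= mulf_neq0 // gt_eqF.
have [_ ->] := is_deriveM (is_derive_poly Q^`() 0) (is_deriveV s2_neq0 d2s).
have -> : 4 * Q.[0] = 4 * s 0 ^+ 2 by rewrite sqr_sqrtr // ltW.
have scaleE (a b : R) : a *: b = a * b by [].
rewrite /= -/(s 0) !scaleE; field.
by rewrite gt_eqF.
Unshelve. all: by end_near.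
Qed.

Definition quad (a b c : R) : {poly R} := a%:P + b%:P * 'X + c%:P * 'X^2.

Lemma horner_quad a b c t : (quad a b c).[t] = a + b * t + c * t ^+ 2.
Proof. by rewrite !hornerE. Qed.

Lemma quad_mul_at0 a b c d e f : let Q := quad a b c * quad d e f in
  [/\ Q.[0] = a * d, Q^`().[0] = a * e + b * d & Q^`()^`().[0] = 2 * (a * f + b * e + c * d)].
Proof.
rewrite /quad !(derivM, derivD, derivC, derivX, derivXn) !hornerE /=.
by split; ring.
Qed.

Lemma derive1n2_quad_mul a b c d e f :
  derive1n 2 (fun t => (a + b * t + c * t ^+ 2) * (d + e * t + f * t ^+ 2)) 0
  = 2 * (a * f + b * e + c * d).
Proof.
have [_ _ <-] := quad_mul_at0 a b c d e f; rewrite -derive1n2_horner.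
by congr (derive1n 2 _ 0); apply/funext => t; rewrite hornerM !horner_quad.
Qed.

Lemma derive1n2_sqrt_quad_mul a b c d e f : 0 < a * d ->
  derive1n 2 (fun t => Num.sqrt ((a + b * t + c * t ^+ 2) * (d + e * t + f * t ^+ 2))) 0
  = 2 * (a * f + b * e + c * d) / (2 * Num.sqrt (a * d))
    - (a * e + b * d) ^+ 2 / (4 * (a * d) * Num.sqrt (a * d)).
Proof.
have [Q0 <- <-] := quad_mul_at0 a b c d e f; rewrite -Q0 => /derive1n2_sqrt_horner <-.
by congr (derive1n 2 _ 0); apply/funext => t; rewrite hornerM !horner_quad.
Qed.

End SecondDerivatives.

Section PolynomialFunctions.
Variables (R : realType) (n : nat).
Implicit Types (f g : Cn R n -> R) (F G : Cn R n -> Cn R n).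

Lemma eq_polyfun f g : polyfun f -> f =1 g -> polyfun g.
Proof. by move=> pf /funext <-. Qed.

Lemma polyfun_sum (I : Type) (r : seq I) (F : I -> Cn R n -> R) :
  (forall i, polyfun (F i)) -> polyfun (fun p => \sum_(i <- r) F i p).
Proof.
move=> pF; elim: r => [|i r IHr].
  by apply: eq_polyfun (polyfun_cst n 0) _ => p; rewrite big_nil.
by apply: eq_polyfun (polyfun_add (pF i) IHr) _ => p; rewrite big_cons.
Qed.

Lemma polyfun_opp f : polyfun f -> polyfun (fun p => - f p).
Proof.
by move=> pf; apply: eq_polyfun (polyfun_mul (polyfun_cst n (-1)) pf) _ => p; rewrite mulN1r.
Qed.

Lemma polyfun_sqr f : polyfun f -> polyfun (fun p => f p ^+ 2).
Proof. by move=> pf; apply: eq_polyfun (polyfun_mul pf pf) _ => p; rewrite expr2. Qed.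

Definition polymap F : Prop :=
  forall i, polyfun (fun p => (F p).1 i) /\ polyfun (fun p => (F p).2 i).

Lemma polyfun_cdotr F G : polymap F -> polymap G -> polyfun (fun p => cdotr (F p) (G p)).
Proof.
move=> pF pG; apply: polyfun_sum => i; have [pF1 pF2] := pF i; have [pG1 pG2] := pG i.
exact: polyfun_add (polyfun_mul pF1 pG1) (polyfun_mul pF2 pG2).
Qed.

Lemma polyfun_cdoti F G : polymap F -> polymap G -> polyfun (fun p => cdoti (F p) (G p)).
Proof.
move=> pF pG; apply: polyfun_sum => i; have [pF1 pF2] := pF i; have [pG1 pG2] := pG i.
exact: polyfun_add (polyfun_mul pF2 pG1) (polyfun_opp (polyfun_mul pF1 pG2)).
Qed.

Lemma polyfun_cnorm2 F : polymap F -> polyfun (fun p => cnorm2 (F p)).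
Proof. by move=> pF; apply: eq_polyfun (polyfun_cdotr pF pF) _ => p; rewrite cdotrr. Qed.

End PolynomialFunctions.

Section Rho.
Variables (R : realType) (n k : nat).
Implicit Types (p w : Cn R n) (t : R).

(* The vectors [d rho / d zbar] of C^n: [d(x_i^2)/d zbar_i = x_i] and
   [d(y_i^2)/d zbar_i = sqrt(-1) y_i]. *)
Definition dbar_rho1 p : Cn R n := (p.1, fun=> 0).
Definition dbar_rho2 p : Cn R n :=
  (fun i : 'I_n => if (i < k)%N then p.1 i else 0,
   fun i : 'I_n => if (i < k)%N then 0 else p.2 i).

Lemma rho2E p : rho2 k p = \sum_(i < n) (if (i < k)%N then p.1 i ^+ 2 else p.2 i ^+ 2).
Proof.
rewrite /rho2 [RHS](bigID (fun i : 'I_n => (i < k)%N)) /=; congr (_ + _).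
  by apply: eq_bigr => i ->.
by apply: eq_big => i; rewrite leqNgt // => /negbTE ->.
Qed.

Lemma rho1_cnorm2 p : rho1 p = cnorm2 (dbar_rho1 p).
Proof. by apply: eq_bigr => i _; rewrite /= expr0n addr0. Qed.

Lemma rho2_cnorm2 p : rho2 k p = cnorm2 (dbar_rho2 p).
Proof. by rewrite rho2E; apply: eq_bigr => i _ /=; case: ifP => _; ring. Qed.

Lemma rho1_cshift p t w :
  rho1 (cshift p t w) = rho1 p + 2 * cdotr w (dbar_rho1 p) * t + rho1 w * t ^+ 2.
Proof.
rewrite /rho1 /cdotr mulr_sumr !mulr_suml -!big_split; apply: eq_bigr => i _ /=; ring.
Qed.

Lemma rho2_cshift p t w :
  rho2 k (cshift p t w) = rho2 k p + 2 * cdotr w (dbar_rho2 p) * t + rho2 k w * t ^+ 2.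
Proof.
rewrite !rho2E /cdotr mulr_sumr !mulr_suml -!big_split; apply: eq_bigr => i _ /=.
by case: ifP => _; ring.
Qed.

Lemma rho1_Jc w : rho1 (Jc w) = cnorm2 w - rho1 w.
Proof. by rewrite /rho1 /cnorm2 -sumrB; apply: eq_bigr => i _ /=; ring. Qed.

Lemma rho2_Jc w : rho2 k (Jc w) = cnorm2 w - rho2 k w.
Proof.
by rewrite !rho2E /cnorm2 -sumrB; apply: eq_bigr => i _ /=; case: ifP => _; ring.
Qed.

Lemma rho_mul_ge0 p : 0 <= rho1 p * rho2 k p.
Proof. by rewrite rho1_cnorm2 rho2_cnorm2 mulr_ge0 ?cnorm2_ge0. Qed.

Lemma cdotr_dbar_rho_ge0 p : 0 <= cdotr (dbar_rho1 p) (dbar_rho2 p).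
Proof.
apply: sumr_ge0 => i _ /=; rewrite mul0r addr0.
by case: ifP => _; rewrite ?mulr0 // -expr2 sqr_ge0.
Qed.

Lemma levi_rho_mul p w :
  levi (fun q => rho1 q * rho2 k q) p w = prod_levi (dbar_rho1 p) (dbar_rho2 p) w / 2.
Proof.
have line v : hess2 (fun q => rho1 q * rho2 k q) p v = derive1n 2
    (fun t => (rho1 p + 2 * cdotr v (dbar_rho1 p) * t + rho1 v * t ^+ 2)
            * (rho2 k p + 2 * cdotr v (dbar_rho2 p) * t + rho2 k v * t ^+ 2)) 0.
  rewrite /hess2; congr (derive1n 2 _ 0).
  by apply/funext => t; rewrite rho1_cshift rho2_cshift.
rewrite /levi !line !derive1n2_quad_mul !cdotr_Jc rho1_Jc rho2_Jc.
by rewrite /prod_levi -rho1_cnorm2 -rho2_cnorm2; field.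
Qed.

Lemma levi_sqrt_rho_mul p w : 0 < rho1 p * rho2 k p ->
  levi (fun q => Num.sqrt (rho1 q * rho2 k q)) p w =
  comb_gap (dbar_rho1 p) (dbar_rho2 p) w
  / (4 * (rho1 p * rho2 k p) * Num.sqrt (rho1 p * rho2 k p)).
Proof.
move=> rho_gt0.
have line v : hess2 (fun q => Num.sqrt (rho1 q * rho2 k q)) p v = derive1n 2
    (fun t => Num.sqrt ((rho1 p + 2 * cdotr v (dbar_rho1 p) * t + rho1 v * t ^+ 2)
                   * (rho2 k p + 2 * cdotr v (dbar_rho2 p) * t + rho2 k v * t ^+ 2))) 0.
  rewrite /hess2; congr (derive1n 2 _ 0).
  by apply/funext => t; rewrite rho1_cshift rho2_cshift.
rewrite /levi !line !derive1n2_sqrt_quad_mul // !cdotr_Jc rho1_Jc rho2_Jc.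
rewrite /comb_gap -rho1_cnorm2 -rho2_cnorm2.
have s_neq0 : Num.sqrt (rho1 p * rho2 k p) != 0 by rewrite gt_eqF ?sqrtr_gt0.
have rho1_neq0 : rho1 p != 0 by apply: contraTneq rho_gt0 => ->; rewrite mul0r ltxx.
have rho2_neq0 : rho2 k p != 0 by apply: contraTneq rho_gt0 => ->; rewrite mulr0 ltxx.
by field; rewrite s_neq0 rho1_neq0 rho2_neq0.
Qed.

Lemma levi_sqrt_rho_mul_ge0 p w : rho1 p * rho2 k p != 0 ->
  0 <= levi (fun q => Num.sqrt (rho1 q * rho2 k q)) p w.
Proof.
move=> rho_neq0; have rho_gt0 : 0 < rho1 p * rho2 k p by rewrite lt_def rho_neq0 rho_mul_ge0.
rewrite levi_sqrt_rho_mul // divr_ge0 ?comb_gap_ge0 ?cdotr_dbar_rho_ge0 //.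
by rewrite mulr_ge0 ?sqrtr_ge0 // mulr_ge0 ?ltW.
Qed.

Lemma levi_rho_mul_ge0 p w : 0 <= levi (fun q => rho1 q * rho2 k q) p w.
Proof. by rewrite levi_rho_mul divr_ge0 ?prod_levi_ge0 ?cdotr_dbar_rho_ge0. Qed.

(* In coordinates, its zero set is {x_i = 0 for i < k, sum_(i >= k) z_i^2 = 0}. *)
Definition levi_degeneracy p : R := cdotr (dbar_rho1 p) (dbar_rho2 p) ^+ 2
  + cdoti (dbar_rho1 p) (dbar_rho2 p) ^+ 2 + (rho1 p - rho2 k p) ^+ 2.

Lemma levi_degeneracy_eq0 p : levi_degeneracy p = 0 <->
  [/\ cdotr (dbar_rho1 p) (dbar_rho2 p) = 0, cdoti (dbar_rho1 p) (dbar_rho2 p) = 0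
    & rho1 p = rho2 k p].
Proof.
rewrite /levi_degeneracy; split=> [/eqP|[-> -> ->]]; last by rewrite subrr; ring.
rewrite !paddr_eq0 ?addr_ge0 ?sqr_ge0 // !sqrf_eq0 subr_eq0.
by case/andP=> /andP[/eqP -> /eqP ->] /eqP ->.
Qed.

Lemma polyfun_levi_degeneracy : polyfun levi_degeneracy.
Proof.
have pm1 : polymap dbar_rho1 by move=> i; rewrite /dbar_rho1 /=; split; constructor.
have pm2 : polymap dbar_rho2.
  by move=> i; rewrite /dbar_rho2 /=; case: (i < k)%N; split; constructor.
have prho1 : polyfun (@rho1 R n).
  by apply: eq_polyfun (polyfun_cnorm2 pm1) _ => p; rewrite rho1_cnorm2.
have prho2 : polyfun (@rho2 R n k).
  by apply: eq_polyfun (polyfun_cnorm2 pm2) _ => p; rewrite rho2_cnorm2.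
rewrite /levi_degeneracy.
apply: polyfun_add (polyfun_sqr (polyfun_add prho1 (polyfun_opp prho2))).
exact: polyfun_add (polyfun_sqr (polyfun_cdotr pm1 pm2)) (polyfun_sqr (polyfun_cdoti pm1 pm2)).
Qed.

Lemma levi_degeneracy_setI :
  [set p | levi_degeneracy p = 0] `&` (@L1 R n `|` @L2 R n k) = @L1 R n `&` @L2 R n k.
Proof.
apply/seteqP; split=> p /=.
  by case=> /levi_degeneracy_eq0[_ _ rho12]; rewrite /L1 /L2 /= -rho12 => -[] ->.
case; rewrite /L1 /L2 /= => rho1_0 rho2_0; split; last by left.
move: rho1_0 (rho1_0); rewrite {1}rho1_cnorm2 => g0 rho1_0.
by apply/levi_degeneracy_eq0; rewrite (cdotr_norm0 _ g0) (cdoti_norm0 _ g0) rho1_0 rho2_0.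
Qed.

Lemma levi_rho_mul_gt0 p w : levi_degeneracy p <> 0 -> cn_nonzero w ->
  0 < levi (fun q => rho1 q * rho2 k q) p w.
Proof.
move=> degen_neq0 /cnorm2_gt0 w_gt0; rewrite lt_def levi_rho_mul_ge0 andbT.
rewrite levi_rho_mul mulf_eq0 invr_eq0 pnatr_eq0 orbF.
apply/eqP => /(prod_levi_eq0 (cdotr_dbar_rho_ge0 p) w_gt0)[Re0 Im0 rho12].
by apply/degen_neq0/levi_degeneracy_eq0; rewrite rho1_cnorm2 rho2_cnorm2.
Qed.

End Rho.

Theorem proposition2p5 (R : realType) (n k : nat) (hkn : (k <= n)%N) :
  (* sqrt(rho1 rho2) is weakly psh wherever it is C^2, i.e. off L1 u L2 *)
  (forall p : Cn R n, rho1 p * rho2 k p != 0 ->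
     weakly_psh_at (fun q => Num.sqrt (rho1 q * rho2 k q)) p) /\
  (* rho1 rho2 is weakly psh everywhere *)
  (forall p : Cn R n, weakly_psh_at (fun q => rho1 q * rho2 k q) p) /\
  (* a variety V with V n (L1 u L2) = L1 n L2, strict psh outside V *)
  (exists V : set (Cn R n),
     is_variety V /\
     V `&` (@L1 R n `|` @L2 R n k) = @L1 R n `&` @L2 R n k /\
     (forall p, ~ V p -> strictly_psh_at (fun q => rho1 q * rho2 k q) p)).
Proof.
(* The argument works for every k. *)
split; [|split].
- by move=> p rho_neq0 w; exact: levi_sqrt_rho_mul_ge0.
- by move=> p w; exact: levi_rho_mul_ge0.
exists [set p | levi_degeneracy k p = 0]; split; [|split].
- by exists (levi_degeneracy k); split; [exact: polyfun_levi_degeneracy |].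
- exact: levi_degeneracy_setI.
- by move=> p degen_neq0 w; exact: levi_rho_mul_gt0.
Qed.
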